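(* Let $h\ge 2$, $1\le t\le 2h-1$, and let $f_1,\dots,f_t$ be positive integers with $f_1+\dots+f_t\le 2h$. For a positive integer $n$, let $R^{\mathrm{Dist}}(n)$ be the largest integer $q\ge 0$ such that there exist $qt$ pairwise distinct elements $d_1,\dots,d_{qt}\in B$ with $f_1d_{jt+1}+\dots+f_td_{jt+t}=n$ for every $0\le j\le q-1$. Then with probability $1$, $R^{\mathrm{Dist}}(n)\le 4h$ for all sufficiently large $n$.
   Context: Fix an integer $h\ge 2$. Let $B$ be a random set of positive integers in which the events $\{n\in B\}$, $n=1,2,\dots$, are mutually independent and $\mathbb{P}(n\in B)=n^{-\frac{4h-3}{4h-1}}$. *)

From HB Require Import structures.
From mathcomp Require Import all_boot all_order all_algebra.
From mathcomp Require Import all_classical all_reals all_analysis.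
Set Implicit Arguments. Unset Strict Implicit. Unset Printing Implicit Defensive.
Import Order.TTheory GRing.Theory Num.Theory.
Local Open Scope classical_set_scope.
Local Open Scope ring_scope.

Definition mutually_independent {d} {T : measurableType d} {R : realType}
  (P : probability T R) (E : nat -> set T) : Prop :=
  forall s : seq nat, uniq s ->
    P (\big[setI/setT]_(i <- s) E i) = (\prod_(i <- s) P (E i))%E.

(* q is admissible for n: there are q*t pairwise distinct elements
   d_0,...,d_{qt-1} of B with sum_{i<t} f_i d_{jt+i} = n for all j < q
   (0-indexed version of d_{jt+1},...,d_{jt+t}). *)
Definition dist_rep (B : set nat) (t : nat) (f : nat -> nat) (n q : nat) : Prop :=
  exists dd : nat -> nat,
    {in [pred k | (k < q * t)%N] &, injective dd} /\
    (forall k, (k < q * t)%N -> B (dd k)) /\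
    (forall j, (j < q)%N -> (\sum_(i < t) f i * dd (j * t + i))%N = n).

(* For n >= 1 and t >= 1, f_i >= 1 and
   B a set of positive integers, every admissible q satisfies q <= n
   (qt distinct positive integers, each <= n), and q = 0 is admissible,
   so the maximum over q < n+1 is the largest admissible q. *)
Definition RDist (B : set nat) (t : nat) (f : nat -> nat) (n : nat) : nat :=
  (\max_(q < n.+1 | `[< dist_rep B t f n q >]) q)%N.

From HB Require Import structures.
From mathcomp Require Import all_boot all_order all_algebra.
From mathcomp Require Import all_classical all_reals all_analysis.
From mathcomp Require Import ring lra zify.
Import Order.TTheory GRing.Theory Num.Theory.
Local Open Scope classical_set_scope.
Local Open Scope ring_scope.

(* Write u(n) = n^(1/m) with m = 4h - 1, so that P(n \in B) = u(n)^-(m-2).  In a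
   representation n = f_1 d_1 + ... + f_t d_t some part satisfies
   d_i >= n / (t (f_1 + ... + f_t)), hence the expected number of representations
   is at most C u(n)^-(m-2) (sum_(d <= n) u(d)^-(m-2))^(t-1) <= C u(n)^(2t-m) <= C / u(n),
   since 2t + 1 <= m.  Pairwise disjoint representations use distinct elements of B,
   so by independence m + 2 = 4h + 1 of them occur with probability at most
   (C / u(n))^(m+2) = C^(m+2) n^-(1 + 2/m), which is summable; Borel-Cantelli
   concludes.  The sums over u are telescoped, using u(n+1)^m - u(n)^m = 1. *)

Section Roots.
Variable R : realType.

Definition natroot (m x : nat) : R := x%:R `^ m%:R^-1.

Lemma natroot_ge0 m x : 0 <= natroot m x.
Proof. exact: powR_ge0. Qed.

Lemma natrootX m x : (0 < m)%N -> natroot m x ^+ m = x%:R.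
Proof.
move=> m0; rewrite /natroot -powR_mulrn ?powR_ge0 // -powRrM mulVf ?powRr1 //.
by rewrite pnatr_eq0 -lt0n.
Qed.

Lemma le_natroot m : {homo natroot m : x y / (x <= y)%N >-> x <= y}.
Proof.
by move=> x y xy; apply: ge0_ler_powR; rewrite ?nnegrE ?invr_ge0 ?ler0n ?ler_nat.
Qed.

Lemma natroot1 m : natroot m 1 = 1.
Proof. by rewrite /natroot powR1. Qed.

Lemma natroot_ge1 m x : (0 < x)%N -> 1 <= natroot m x.
Proof. by move=> x1; rewrite -(natroot1 m) le_natroot. Qed.

Lemma natroot_gt0 m x : (0 < x)%N -> 0 < natroot m x.
Proof. by move=> x0; apply: (lt_le_trans ltr01); exact: natroot_ge1. Qed.

Lemma natrootM m x y : natroot m (x * y) = natroot m x * natroot m y.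
Proof. by rewrite /natroot natrM powRM. Qed.

Lemma natroot_le_id m x : (0 < m)%N -> (0 < x)%N -> natroot m x <= x%:R.
Proof.
move=> m0 x0; rewrite /natroot ler1_powR ?ler1n // invf_le1 ?ltr0n ?ler1n //.
Qed.

Lemma subrXX_le_mul (x y : R) m : 0 <= y -> y <= x ->
  x ^+ m - y ^+ m <= m%:R * x ^+ m.-1 * (x - y).
Proof.
move=> y0 yx; rewrite subrXX mulrC ler_wpM2r ?subr_ge0 //.
have -> : m%:R * x ^+ m.-1 = \sum_(i < m) x ^+ m.-1.
  by rewrite sumr_const card_ord mulr_natl.
apply: ler_sum => i _.
have x0 : 0 <= x by apply: le_trans yx.
have -> : x ^+ m.-1 = x ^+ (m.-1 - i) * x ^+ i.
  by rewrite -exprD subnK //; have := ltn_ord i; case: m i => // m i.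
by rewrite ler_wpM2l ?exprn_ge0 // lerXn2r.
Qed.

Section UnitGap.
Variables (x y : R) (m : nat).
Hypotheses (m_gt2 : (2 < m)%N) (y_ge0 : 0 <= y) (le_yx : y <= x) (x_ge1 : 1 <= x).
Hypothesis gap1 : x ^+ m - y ^+ m = 1.

Lemma unit_gap_sqr : 1 <= m%:R * x ^+ (m - 2) * (x ^+ 2 - y ^+ 2).
Proof.
have := @subrXX_le_mul x y m y_ge0 le_yx; rewrite gap1 => /le_trans; apply.
have -> : x ^+ m.-1 = x ^+ (m - 2) * x by rewrite -exprSr; congr (_ ^+ _); lia.
have X0 : 0 <= x ^+ (m - 2) by rewrite exprn_ge0 // (le_trans _ x_ge1).
rewrite -!mulrA ler_wpM2l // ler_wpM2l //.
have : 0 <= y * (x - y) by rewrite mulr_ge0 // subr_ge0.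
by rewrite !expr2 => ?; nra.
Qed.

Lemma invX_le_sqr_gap : (x ^+ (m - 2))^-1 <= m%:R * (x ^+ 2 - y ^+ 2).
Proof.
have X0 : 0 < x ^+ (m - 2) by rewrite exprn_gt0 // (lt_le_trans _ x_ge1).
by rewrite -[_^-1]mul1r ler_pdivrMr // mulrAC; exact: unit_gap_sqr.
Qed.

Lemma invX_le_invsqr_gap : 1 <= y ->
  (x ^+ m.+2)^-1 <= m%:R * ((y ^+ 2)^-1 - (x ^+ 2)^-1).
Proof.
move=> y_ge1; have y_gt0 : 0 < y by apply: lt_le_trans y_ge1.
have x_gt0 : 0 < x by apply: lt_le_trans x_ge1.
have y0 : 0 < y ^+ 2 by rewrite exprn_gt0.
have x0 : 0 < x ^+ 2 by rewrite exprn_gt0.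
have yx2 : y ^+ 2 <= x ^+ 2 by rewrite lerXn2r // nnegrE (le_trans _ le_yx).
have -> : (y ^+ 2)^-1 - (x ^+ 2)^-1 = (x ^+ 2 - y ^+ 2) / (x ^+ 2 * y ^+ 2).
  by field; rewrite !gt_eqF.
have -> : x ^+ m.+2 = x ^+ (m - 2) * (x ^+ 2 * x ^+ 2).
  by rewrite -!exprD; congr (_ ^+ _); lia.
rewrite invfM; apply: le_trans (ler_wpM2r _ invX_le_sqr_gap) _.
  by rewrite invr_ge0 mulr_ge0 ?ltW.
rewrite -mulrA ler_wpM2l // ler_wpM2l ?subr_ge0 //.
by rewrite lef_pV2 ?posrE ?mulr_gt0 // ler_wpM2l // ltW.
Qed.

End UnitGap.

Definition dens (m x : nat) : R := (natroot m x ^+ (m - 2))^-1.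

Lemma dens_ge0 m x : 0 <= dens m x.
Proof. by rewrite invr_ge0 exprn_ge0 // natroot_ge0. Qed.

Lemma powR_dens m x : (0 < m)%N ->
  x%:R `^ (- ((m - 2)%:R / m%:R)) = dens m x.
Proof.
move=> m0; rewrite /dens /natroot -powR_invn ?powR_ge0 // -powRrM.
by rewrite mulrN mulrC.
Qed.

Lemma dens_le_mul m n c x : (0 < m)%N -> (0 < c)%N -> (0 < x)%N ->
  (0 < n)%N -> (n <= c * x)%N -> dens m x <= c%:R ^+ (m - 2) * dens m n.
Proof.
move=> m0 c0 x0 n0 le_n_cx.
have le_roots : natroot m n <= c%:R * natroot m x.
  apply: le_trans (le_natroot m _ _ le_n_cx) _.
  by rewrite natrootM ler_wpM2r ?natroot_ge0 ?natroot_le_id.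
have pos u : (0 < u)%N -> 0 < natroot m u ^+ (m - 2).
  by move=> u0; rewrite exprn_gt0 // natroot_gt0.
rewrite /dens -[X in _ <= X]invrK invfM invrK lef_pV2 ?posrE ?mulr_gt0 ?invr_gt0 ?pos //.
  rewrite mulrC ler_pdivrMr ?exprn_gt0 ?ltr0n // mulrC -exprMn.
  by rewrite lerXn2r ?nnegrE ?mulr_ge0 ?natroot_ge0.
by rewrite exprn_gt0 ?ltr0n.
Qed.

Lemma dens_mul_natrootX_le m n a : (a + 3 <= m)%N -> (0 < n)%N ->
  dens m n * natroot m n ^+ a <= (natroot m n)^-1.
Proof.
move=> am n0; have u1 := natroot_ge1 m n n0; set u := natroot m n in u1 *.
have u0 : 0 < u by apply: lt_le_trans u1.
have -> : dens m n = (u ^+ (m - 3))^-1 * u^-1.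
  by rewrite /dens -/u -invfM -exprSr; congr (_ ^-1); congr (_ ^+ _); lia.
rewrite mulrAC ler_piMl ?invr_ge0 ?(ltW u0) // mulrC ler_pdivrMr ?exprn_gt0 // mul1r.
by apply: ler_weXn2l => //; lia.
Qed.

Lemma natroot_unit_gap m n : (0 < m)%N ->
  natroot m n.+1 ^+ m - natroot m n ^+ m = 1.
Proof. by move=> m0; rewrite !natrootX // -natrB // subSnn. Qed.

Lemma sum_dens_le m n : (2 < m)%N ->
  \sum_(d < n) dens m d.+1 <= m%:R * natroot m n ^+ 2.
Proof.
move=> m2; have m0 : (0 < m)%N by lia.
elim: n => [|n IH]; first by rewrite big_ord0 mulr_ge0 // sqr_ge0.
rewrite big_ord_recr //= -[X in _ <= X](subrK (m%:R * natroot m n ^+ 2)) -mulrBr.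
rewrite addrC lerD //; apply: invX_le_sqr_gap; rewrite ?natroot_ge0 ?le_natroot //.
  exact: natroot_ge1.
exact: natroot_unit_gap.
Qed.

Lemma sum_natroot_invX_le m k : (2 < m)%N ->
  \sum_(n < k) (natroot m n.+1 ^+ m.+2)^-1 <= m.+1%:R.
Proof.
move=> m2; have m0 : (0 < m)%N by lia.
suff tele j : \sum_(n < j.+1) (natroot m n.+1 ^+ m.+2)^-1
              <= 1 + m%:R * (1 - (natroot m j.+1 ^+ 2)^-1).
  case: k => [|k]; first by rewrite big_ord0.
  apply: le_trans (tele k) _; rewrite -nat1r lerD2l.
  by rewrite ler_piMr ?ler0n // lerBlDr lerDl invr_ge0 exprn_ge0 // natroot_ge0.
elim: j => [|j IH]; first by rewrite big_ord1 natroot1 !expr1n invr1 subrr mulr0 addr0.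
have -> : 1 + m%:R * (1 - (natroot m j.+2 ^+ 2)^-1)
          = 1 + m%:R * (1 - (natroot m j.+1 ^+ 2)^-1)
            + m%:R * ((natroot m j.+1 ^+ 2)^-1 - (natroot m j.+2 ^+ 2)^-1) by ring.
rewrite big_ord_recr lerD //; apply: invX_le_invsqr_gap;
  rewrite ?natroot_ge0 ?le_natroot ?natroot_ge1 //.
exact: natroot_unit_gap.
Qed.

End Roots.

Definition is_rep n t (f : nat -> nat) (g : {ffun 'I_t -> 'I_n.+1}) : bool :=
  ((\sum_(i < t) f i * g i)%N == n) && [forall i, (0 < g i)%N].

Lemma rep_large_part n t (f : nat -> nat) (g : {ffun 'I_t -> 'I_n.+1}) : (0 < n)%N ->
  (0 < \sum_(i < t) f i)%N -> is_rep n t f g ->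
  exists i : 'I_t, (n <= t * (\sum_(i < t) f i) * g i)%N.
Proof.
move=> n_gt0 F_gt0 /andP[/eqP sum_fg _].
have t_gt0 : (0 < t)%N by move: F_gt0; case: (t) => //; rewrite big_ord0.
apply/existsP; apply: contraT; rewrite negb_exists => /forallP small.
set F := (\sum_(i < t) f i)%N in small F_gt0.
have : (t * F * n <= F * n.-1)%N.
  rewrite -{1}sum_fg big_distrr /= /F big_distrl /=; apply: leq_sum => i _.
  have := small i; rewrite -ltnNge => lt_i.
  have -> : (t * F * (f i * g i) = f i * (t * F * g i))%N by ring.
  by rewrite leq_mul2l -ltnS prednK // lt_i orbT.
nia.
Qed.

Definition drop_coord {t n} (i : 'I_t) (g : {ffun 'I_t -> 'I_n.+1}) : {ffun 'I_t -> 'I_n.+1} :=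
  [ffun j => if j == i then ord0 else g j].

(** As [f i > 0], a representation is determined by its coordinates off [i]. *)
Lemma drop_coord_inj n t (f : nat -> nat) (i : 'I_t) : (0 < f i)%N ->
  {in [set g | is_rep n t f g]%SET &, injective (drop_coord i)}.
Proof.
move=> fi_gt0 g1 g2; rewrite !inE => /andP[/eqP s1 _] /andP[/eqP s2 _] eq_drop.
have off j : j != i -> g1 j = g2 j.
  move=> /negbTE ji; have := congr1 (fun g : {ffun 'I_t -> 'I_n.+1} => g j) eq_drop.
  by rewrite !ffunE ji.
apply/ffunP => j; case: (eqVneq j i) => [->|/off //].
rewrite (bigD1 i) //= (eq_bigr (fun j : 'I_t => f j * g2 j)%N) in s1; last first.
  by move=> k /off ->.
rewrite (bigD1 i) //= in s2; apply: val_inj; apply/eqP.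
by rewrite -(eqn_pmul2l fi_gt0) -(eqn_add2r (\sum_(k < t | k != i) f k * g2 k)%N) s1 s2.
Qed.

Section RepMass.
Variables (R : realType) (m : nat).
Implicit Types f : nat -> nat.

Definition rep_mass n t f : R :=
  \sum_(g : {ffun 'I_t -> 'I_n.+1} | is_rep n t f g) \prod_(i < t) dens R m (g i).

Lemma rep_mass_ge0 n t f : 0 <= rep_mass n t f.
Proof. by apply: sumr_ge0 => g _; apply: prodr_ge0 => i _; exact: dens_ge0. Qed.

Lemma sum_rep_drop_le n t f (i : 'I_t) : (0 < f i)%N ->
  \sum_(g : {ffun 'I_t -> 'I_n.+1} | is_rep n t f g) \prod_(j < t | j != i) dens R m (g j)
  <= (\sum_(d < n) dens R m d.+1) ^+ t.-1.
Proof.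
move=> fi_gt0.
pose G (g : {ffun 'I_t -> 'I_n.+1}) := \prod_(j < t | j != i) dens R m (g j).
have G_drop g : G (drop_coord i g) = G g.
  by apply: eq_bigr => j /negbTE ji; rewrite ffunE ji.
pose Q (j : 'I_t) (x : 'I_n.+1) := if j == i then x == ord0 else (0 < x)%N.
have drop_family g : g \in [set g | is_rep n t f g]%SET -> drop_coord i g \in family Q.
  rewrite inE => /andP[_ /forallP pos]; apply/familyP => j.
  by rewrite /Q ffunE; case: eqP => // _; exact: pos.
have G_ge0 g : 0 <= G g by apply: prodr_ge0 => j _; exact: dens_ge0.
have -> : \sum_(g | is_rep n t f g) G g
          = \sum_(g in [set g | is_rep n t f g]%SET) G (drop_coord i g).
  by apply: eq_big => [g|g _]; rewrite ?inE ?G_drop.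
rewrite -big_imset; last exact: drop_coord_inj.
apply: (@le_trans _ _ (\sum_(y in family Q) G y)).
  rewrite big_mkcond [X in _ <= X]big_mkcond /=; apply: ler_sum => y _.
  by case: ifP => [/imsetP[g /drop_family gQ ->]|_]; [rewrite gQ | case: ifP].
rewrite (eq_bigr (fun y : {ffun 'I_t -> 'I_n.+1} =>
                    \prod_(j < t) (if j == i then 1 else dens R m (y j)))); last first.
  by move=> y _; rewrite /G big_mkcond; apply: eq_bigr => j _; case: eqP.
rewrite -(bigA_distr_big_dep _ (fun j (x : 'I_n.+1) => if j == i then 1 else dens R m x)).
rewrite (bigD1 i) //= /Q eqxx big_pred1_eq mul1r.
rewrite (eq_bigr (fun _ => \sum_(d < n) dens R m d.+1)); last first.
  by move=> j /negbTE ji; rewrite ji big_mkcond big_ord_recl /= add0r.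
by rewrite prodr_const cardC1 card_ord.
Qed.

Lemma prod_dens_rep_le n t f (g : {ffun 'I_t -> 'I_n.+1}) : (0 < m)%N -> (0 < n)%N ->
  (0 < \sum_(i < t) f i)%N -> is_rep n t f g ->
  \prod_(i < t) dens R m (g i) <=
  (t * \sum_(i < t) f i)%N%:R ^+ (m - 2) * dens R m n
    * \sum_(i < t) \prod_(j < t | j != i) dens R m (g j).
Proof.
move=> m0 n0 F0 g_rep; have [i le_n] := @rep_large_part n t f g n0 F0 g_rep.
have gi0 : (0 < g i)%N by move: g_rep => /andP[_ /forallP]; apply.
have c0 : (0 < t * \sum_(i < t) f i)%N by rewrite muln_gt0 F0 (leq_ltn_trans _ (ltn_ord i)).
have P_ge0 k : 0 <= \prod_(j < t | j != k) dens R m (g j).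
  by apply: prodr_ge0 => j _; exact: dens_ge0.
rewrite (bigD1 i) //= [X in _ <= _ * X](bigD1 i) //= mulrDr.
rewrite -[X in X <= _]addr0 lerD ?mulr_ge0 ?sumr_ge0 ?exprn_ge0 ?dens_ge0 //.
by rewrite ler_wpM2r // dens_le_mul.
Qed.

Lemma rep_mass_le_sum n t f : (0 < m)%N -> (0 < n)%N -> (0 < t)%N ->
  (forall i, (i < t)%N -> (0 < f i)%N) ->
  rep_mass n t f <= t%:R * ((t * \sum_(i < t) f i)%N%:R ^+ (m - 2) * dens R m n)
                    * (\sum_(d < n) dens R m d.+1) ^+ t.-1.
Proof.
move=> m0 n0 t0 f_gt0.
have F0 : (0 < \sum_(i < t) f i)%N.
  by case: t t0 f_gt0 => // t _ f_gt0; rewrite big_ord_recl addn_gt0 f_gt0.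
set C := _ * dens R m n.
have C0 : 0 <= C by rewrite mulr_ge0 ?exprn_ge0 ?dens_ge0.
apply: (@le_trans _ _ (\sum_(g | is_rep n t f g)
    \sum_(i < t) C * \prod_(j < t | j != i) dens R m (g j))).
  by apply: ler_sum => g g_rep; rewrite -mulr_sumr; exact: prod_dens_rep_le.
rewrite exchange_big /=.
have -> : t%:R * C * (\sum_(d < n) dens R m d.+1) ^+ t.-1
          = \sum_(i < t) C * (\sum_(d < n) dens R m d.+1) ^+ t.-1.
  by rewrite sumr_const card_ord -[RHS]mulr_natl mulrA.
apply: ler_sum => i _; rewrite -mulr_sumr ler_wpM2l //.
exact/sum_rep_drop_le/f_gt0.
Qed.

Lemma rep_mass_bound t f : (2 * t + 1 <= m)%N -> (0 < t)%N ->
  (forall i, (i < t)%N -> (0 < f i)%N) ->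
  exists2 K : R, 0 <= K & forall n, (0 < n)%N -> rep_mass n t f <= K / natroot R m n.
Proof.
move=> tm t0 f_gt0; have m2 : (2 < m)%N by lia.
have m0 : (0 < m)%N by lia.
set c := ((t * \sum_(i < t) f i)%N%:R : R) ^+ (m - 2).
have c0 : 0 <= c by rewrite exprn_ge0.
exists (t%:R * c * m%:R ^+ t.-1) => [|n n0]; first by rewrite !mulr_ge0 ?exprn_ge0.
apply: le_trans (@rep_mass_le_sum n t f m0 n0 t0 f_gt0) _.
apply: le_trans (ler_wpM2l _ (lerXn2r t.-1 _ _ (sum_dens_le R m n m2))) _.
- by rewrite !mulr_ge0 ?exprn_ge0 ?dens_ge0.
- by rewrite nnegrE; apply: sumr_ge0 => d _; exact: dens_ge0.
- by rewrite nnegrE mulr_ge0 ?exprn_ge0 ?natroot_ge0.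
rewrite exprMn -exprM -/c.
have -> : t%:R * (c * dens R m n) * (m%:R ^+ t.-1 * natroot R m n ^+ (2 * t.-1))
          = t%:R * c * m%:R ^+ t.-1 * (dens R m n * natroot R m n ^+ (2 * t.-1)) by ring.
by rewrite ler_wpM2l ?mulr_ge0 ?exprn_ge0 // dens_mul_natrootX_le //; lia.
Qed.

End RepMass.

Lemma uniq_ord_radix Q t :
  uniq [seq (nat_of_ord j * t + nat_of_ord i)%N | j <- enum 'I_Q, i <- enum 'I_t].
Proof.
apply: allpairs_uniq; rewrite ?enum_uniq // => -[j1 i1] [j2 i2] _ _ /= e.
have t0 : (0 < t)%N by apply: leq_ltn_trans (ltn_ord i1).
have := congr1 (divn^~ t) e; have := congr1 (modn^~ t) e.
rewrite /= !modnMDl !modn_small // !divnMDl // !divn_small // !addn0 => ei ej.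
by congr (_, _); apply: val_inj.
Qed.

Section Configurations.
Variables (Q n t : nat).
Implicit Types (f : nat -> nat) (c : {ffun 'I_Q -> {ffun 'I_t -> 'I_n.+1}}).

Definition conf_vals c : seq nat :=
  [seq nat_of_ord (c j i) | j <- enum 'I_Q, i <- enum 'I_t].

Definition disjoint_reps f c : bool :=
  [forall j, is_rep n t f (c j)] && uniq (conf_vals c).

Lemma big_conf_vals (M : Type) (idx : M) (op : Monoid.com_law idx) c (F : nat -> M) :
  \big[op/idx]_(x <- conf_vals c) F x = \big[op/idx]_(j < Q) \big[op/idx]_(i < t) F (c j i).
Proof.
rewrite /conf_vals big_allpairs_dep /= big_enum /=; apply: eq_bigr => j _.
by rewrite big_enum.
Qed.

Lemma sum_disjoint_reps_le (R : realType) m f :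
  \sum_(c | disjoint_reps f c) \prod_(x <- conf_vals c) dens R m x <= rep_mass R m n t f ^+ Q.
Proof.
under eq_bigr do rewrite big_conf_vals.
have -> : rep_mass R m n t f ^+ Q
          = \prod_(j < Q) \sum_(g | is_rep n t f g) \prod_(i < t) dens R m (g i).
  by rewrite prodr_const card_ord.
rewrite bigA_distr_big.
rewrite big_mkcond [X in _ <= X]big_mkcond /=; apply: ler_sum => c _.
have P0 : 0 <= \prod_(j < Q) \prod_(i < t) dens R m (c j i).
  by apply: prodr_ge0 => j _; apply: prodr_ge0 => i _; exact: dens_ge0.
case: ifP => [/andP[/forallP reps _]|_]; last by case: ifP.
by rewrite ifT //; apply/ffun_onP => j; exact: reps.
Qed.

End Configurations.
Arguments conf_vals {Q n t} c.
Arguments disjoint_reps {Q n t} f c.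

Lemma measure_bigsetU_le d (T : measurableType d) (R : realType)
    (mu : {measure set T -> \bar R}) (I : Type) (s : seq I) (p : pred I) (F : I -> set T) :
  (forall i, measurable (F i)) ->
  (mu (\big[setU/set0]_(i <- s | p i) F i) <= \sum_(i <- s | p i) mu (F i))%E.
Proof.
move=> mF; elim: s => [|x s IH]; first by rewrite !big_nil measure0.
rewrite !big_cons; case: ifP => _ //.
apply: le_trans (measureU2 _ _ _) _ => //; first exact: bigsetU_measurable.
exact: leeD.
Qed.

Lemma ae_eventually_not d (T : measurableType d) (R : realType)
    (mu : {measure set T -> \bar R}) (A : (set T)^nat) :
  (forall n, measurable (A n)) -> (\sum_(n <oo) mu (A n) < +oo)%E ->
  {ae mu, forall w, exists N, forall n, (N <= n)%N -> ~ A n w}.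
Proof.
move=> mA sum_fin; exists (lim_sup_set A); split.
- apply: bigcap_measurable => // k _.
  by apply: bigcup_measurable => j _; exact: mA.
- exact: lim_sup_set_cvg0.
move=> w /= not_eventually N _.
apply: contrapT => not_often; apply: not_eventually; exists N => n Nn An.
by apply: not_often; exists n.
Qed.

Lemma nneseries_lt_pinfty_of_le (R : realType) (a : nat -> \bar R) (b : nat -> R) (C : R) :
  (forall n, 0 <= a n)%E -> (forall n, a n <= (b n)%:E)%E ->
  (forall k, \sum_(n < k) b n <= C) -> (\sum_(n <oo) a n < +oo)%E.
Proof.
move=> a_ge0 le_ab sum_b; apply: le_lt_trans (ltry C).
apply: lime_le; first exact: is_cvg_nneseries.
apply: nearW => k; apply: (@le_trans _ _ (\sum_(0 <= n < k) (b n)%:E)%E).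
  by apply: lee_sum => n _; exact: le_ab.
by rewrite sumEFin lee_fin big_mkord.
Qed.

Section ManyReps.
Context {d : measure_display} {T : measurableType d}.
Implicit Types (E : nat -> set T) (f : nat -> nat).

Definition many_reps E Q t f n : set T :=
  \big[setU/set0]_(c : {ffun 'I_Q -> {ffun 'I_t -> 'I_n.+1}} | disjoint_reps f c)
    \big[setI/setT]_(x <- conf_vals c) E x.

Lemma measurable_many_reps E Q t f n :
  (forall x, measurable (E x)) -> measurable (many_reps E Q t f n).
Proof.
by move=> mE; apply: bigsetU_measurable => c _; apply: bigsetI_measurable => x _.
Qed.

(** Distinctness of the values of a configuration is what makes
    independence applicable. *)
Lemma prob_many_reps_le {R : realType} (P : probability T R) {E m} Q t f n :
  (forall x, measurable (E x)) -> mutually_independent P E ->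
  (forall x, (0 < x)%N -> P (E x) = (dens R m x)%:E) ->
  (P (many_reps E Q t f n) <= (rep_mass R m n t f ^+ Q)%:E)%E.
Proof.
move=> mE indep PE.
apply: le_trans (@measure_bigsetU_le _ _ _ P _ _ _ _ _) _.
  by move=> c; apply: bigsetI_measurable => x _.
rewrite (eq_bigr (fun c => (\prod_(x <- conf_vals c) dens R m x)%:E)); last first.
  move=> c /andP[/forallP reps uniq_c].
  rewrite -[LHS]/(P (\big[setI/setT]_(x <- conf_vals c) E x)) indep //.
  rewrite !big_conf_vals -prodEFin.
  apply: eq_bigr => j _; rewrite -prodEFin; apply: eq_bigr => i _.
  by rewrite PE //; have /andP[_ /forallP] := reps j; apply.
by rewrite sumEFin lee_fin sum_disjoint_reps_le.
Qed.

Lemma many_reps_of_dist_rep E w Q t f n q :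
  (forall i, (i < t)%N -> (0 < f i)%N) -> (Q <= q)%N ->
  dist_rep [set x | (0 < x)%N /\ E x w] t f n q -> many_reps E Q t f n w.
Proof.
move=> f_gt0 Qq [dd [dd_inj [dd_B sum_dd]]].
have jt_lt (j : 'I_Q) (i : 'I_t) : (j * t + i < q * t)%N.
  by have := ltn_ord j; have := ltn_ord i; nia.
have dd_le j (i : 'I_t) : (j < q)%N -> (dd (j * t + i) <= n)%N.
  move=> jq; rewrite -(sum_dd j jq) (bigD1 i) //= (leq_trans _ (leq_addr _ _)) //.
  by rewrite leq_pmull // f_gt0.
pose c := [ffun j : 'I_Q => [ffun i : 'I_t => (inord (dd (j * t + i)%N) : 'I_n.+1)]].
have cE j i : (c j i : nat) = dd (j * t + i)%N.
  by rewrite !ffunE inordK // ltnS dd_le // (leq_trans (ltn_ord j)).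
have vals_c : conf_vals c
    = map dd [seq (nat_of_ord j * t + nat_of_ord i)%N | j <- enum 'I_Q, i <- enum 'I_t].
  by rewrite map_allpairs; apply: eq_allpairs => j i; rewrite cE.
rewrite /many_reps -bigcup_pred; exists c => /=.
  apply/andP; split.
    apply/forallP => j; apply/andP; split.
      by apply/eqP; under eq_bigr do rewrite cE; rewrite sum_dd // (leq_trans (ltn_ord j)).
    by apply/forallP => i; rewrite cE; have [] := dd_B _ (jt_lt j i).
  rewrite vals_c map_inj_in_uniq ?uniq_ord_radix //.
  move=> x y /allpairsP[[j1 i1] [_ _ ->]] /allpairsP[[j2 i2] [_ _ ->]] /=.
  by apply: dd_inj; rewrite inE /= jt_lt.
rewrite -bigcap_seq => x /= /allpairsP[[j i] [_ _ ->]] /=.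
by rewrite cE; have [] := dd_B _ (jt_lt j i).
Qed.

Lemma RDist_le_of_not_many_reps E w Q t f n :
  (forall i, (i < t)%N -> (0 < f i)%N) -> ~ many_reps E Q.+1 t f n w ->
  (RDist [set x | (0 < x)%N /\ E x w] t f n <= Q)%N.
Proof.
move=> f_gt0 not_many; apply/bigmax_leqP => q /asboolP q_adm.
rewrite leqNgt; apply/negP => Qq; apply: not_many.
exact: many_reps_of_dist_rep q_adm.
Qed.

End ManyReps.

Theorem ae_eventually_RDist_le (m t : nat) (f : nat -> nat)
    d (T : measurableType d) (R : realType) (P : probability T R) (E : nat -> set T) :
  (0 < t)%N -> (2 * t + 1 <= m)%N -> (forall i, (i < t)%N -> (0 < f i)%N) ->
  (forall n, measurable (E n)) -> mutually_independent P E ->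
  (forall n, (0 < n)%N -> P (E n) = ((n%:R : R) `^ (- ((m - 2)%:R / m%:R)))%:E) ->
  {ae P, forall w, exists N, forall n, (N <= n)%N ->
     (RDist [set x | (0 < x)%N /\ E x w] t f n <= m.+1)%N}.
Proof.
move=> t0 tm f_gt0 mE indep PE; have m2 : (2 < m)%N by lia.
have PE_dens x : (0 < x)%N -> P (E x) = (dens R m x)%:E.
  by move=> x0; rewrite PE // powR_dens //; lia.
have [K K0 mass_le] := @rep_mass_bound R m t f tm t0 f_gt0.
(* Indices are shifted by one, as the bound on [rep_mass] needs [0 < n]. *)
pose A n := many_reps E m.+2 t f n.+1.
have PA n : (P (A n) <= (K ^+ m.+2 * (natroot R m n.+1 ^+ m.+2)^-1)%:E)%E.
  apply: le_trans (prob_many_reps_le P m.+2 t f n.+1 mE indep PE_dens) _.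
  rewrite lee_fin -exprVn -exprMn lerXn2r ?nnegrE ?mulr_ge0 ?invr_ge0 ?rep_mass_ge0 ?natroot_ge0 //.
  exact: mass_le.
have [X [mX PX0 notA]] : {ae P, forall w, exists N, forall n, (N <= n)%N -> ~ A n w}.
  apply: ae_eventually_not => [n|]; first exact: measurable_many_reps.
  apply: (@nneseries_lt_pinfty_of_le _ _ _ (K ^+ m.+2 * m.+1%:R) _ PA) => [n|k].
    exact: measure_ge0.
  by rewrite -mulr_sumr ler_wpM2l ?exprn_ge0 ?sum_natroot_invX_le.
exists X; split => // w not_eventually; apply: notA => -[N eventually_notA].
apply: not_eventually; exists N.+1 => -[//|n] Nn.
exact/RDist_le_of_not_many_reps/eventually_notA.
Qed.

Theorem mainTheorem8 (h : nat) (t : nat) (f : nat -> nat)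
  (d : measure_display) (T : measurableType d) (R : realType)
  (P : probability T R) (E : nat -> set T) :
  (2 <= h)%N ->
  (1 <= t)%N -> (t <= 2 * h - 1)%N ->
  (forall i, (i < t)%N -> (0 < f i)%N) ->
  (\sum_(i < t) f i <= 2 * h)%N ->
  (forall n, measurable (E n)) ->
  mutually_independent P E ->
  (forall n, (0 < n)%N ->
     P (E n) = ((n%:R : R) `^ (- ((4 * h - 3)%:R / (4 * h - 1)%:R)))%:E) ->
  {ae P, forall w : T,
     exists N : nat, forall n : nat, (N <= n)%N ->
       (RDist [set m | (0 < m)%N /\ E m w] t f n <= 4 * h)%N}.
Proof.
move=> h2 t1 th f_gt0 _ mE indep PE.
have -> : (4 * h = (4 * h - 1).+1)%N by lia.
apply: ae_eventually_RDist_le => //; first lia.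
by move=> n n0; rewrite PE // (_ : (4 * h - 1 - 2 = 4 * h - 3)%N) //; lia.
Qed.
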